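(* Let $E$ be an elementary wqo given by an expression in normal form. For every finite subset $S\subseteq E$ there exists $E'<_{\mathrm{approx}}E$ such that $\downarrow_E S\le_{\mathrm{cond+st}}E'$.
   Context: A wqo is a quasi-order in which every infinite sequence has $i<j$ with $x_i\le x_j$. Multiplicatively indecomposable ordinals $\ge\omega$ are those of the form $\omega^{\omega^\gamma}$; an ordinal $\alpha$ is viewed as the wqo $(\alpha,\le)$. Constructions: $E_1\sqcup E_2$ disjoint union ordered by $\le_{E_1}\cup\le_{E_2}$; $E_1\times E_2$ Cartesian product with componentwise order; $E^{<\omega}$ finite words with subword embedding; $\mathsf{M}^\diamond(E)$ finite multisets with multiset embedding, and $\mathsf{M}^\diamond_n(E)$ its restriction to multisets of exactly $n$ elements; $\mathcal{P}_f(E)$ finite subsets with Hoare embedding ($S\le_H S'$ iff $\forall a\in S\,\exists b\in S'\,a\le b$); $E^{\times n}$ the $n$-fold Cartesian power. Elementary wqos are given by expressions of the grammar $E::=\alpha\ (\alpha\ge\omega^\omega\text{ multiplicatively indecomposable})\mid E_1\sqcup E_2\mid E_1\times E_2\mid E^{<\omega}\mid\mathsf{M}^\diamond(E)\mid\mathcal{P}_f(E)$; such an expression is in normal form if no subexpression can be rewritten by the rules $\mathcal{P}_f(\alpha)\to\alpha$; $E\times(E_1\sqcup E_2)\to(E\times E_1)\sqcup(E\times E_2)$; $(E_1\sqcup E_2)\times E\to(E_1\times E)\sqcup(E_2\times E)$; $\mathsf{M}^\diamond(E_1\sqcup E_2)\to\mathsf{M}^\diamond(E_1)\times\mathsf{M}^\diamond(E_2)$;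 $\mathcal{P}_f(E_1\sqcup E_2)\to\mathcal{P}_f(E_1)\times\mathcal{P}_f(E_2)$. Two wqos are wpo-isomorphic ($\cong_{wpo}$) if their quotients by $x\equiv y\iff x\le y\le x$ are isomorphic. Approximation $E'<_{\mathrm{approx}}E$ (by recursion on the expression $E$): if $E=\alpha$, $E'\cong_{wpo}\alpha'$ for some $\alpha'<\alpha$; if $E=E_1\sqcup E_2$ (resp. $E_1\times E_2$), $E'\cong_{wpo}E_1'\sqcup E_2'$ (resp. $E_1'\times E_2'$) with $E_i'<_{\mathrm{approx}}E_i$; if $E=E_1^{<\omega}$, $E'\cong_{wpo}(E_1')^{\times n}$ with $E_1'<_{\mathrm{approx}}E_1$, $n<\omega$; if $E=\mathsf{M}^\diamond(E_1)$, $E'\cong_{wpo}\mathsf{M}^\diamond_n(E_1')$ with $E_1'<_{\mathrm{approx}}E_1$, $n<\omega$; if $E=\mathcal{P}_f(E_1)$, $E'\cong_{wpo}\mathcal{P}_f(E_1')$ with $E_1'<_{\mathrm{approx}}E_1$. $\downarrow_E S=\{x\in E:\exists y\in S,\ x\le y\}$ with the induced ordering. A map $f:A\to B$ between wqos is a condensation if it is surjective, monotone, and whenever $b\le_B f(y)$ there exists $x\le_A y$ with $f(x)=b$; $B\le_{\mathrm{cond}}A$ means there is a condensation from $A$ to $B$. $B\le_{\mathrm{st}}A$ means $B$ is isomorphic to a subset of $A$ with the restricted ordering. $\le_{\mathrm{cond+st}}$ is the transitive closure of the union of $\le_{\mathrm{cond}}$ and $\le_{\mathrm{st}}$. *)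

From Stdlib Require Import List Relations.
Import ListNotations.

Record ordinal := Ordinal {
  ocar : Type;
  olt : ocar -> ocar -> Prop;
  olt_wf : well_founded olt;
  olt_trans : forall x y z, olt x y -> olt y z -> olt x z;
  olt_total : forall x y, olt x y \/ x = y \/ olt y x }.

(** * Ordinal exponentiation omega^beta via Cantor normal forms:
    elements of omega^beta are the finite sums omega^b1*n1 + ... + omega^bk*nk
    with b1 > ... > bk in beta and ni > 0, ordered lexicographically. *)
Inductive cnf_valid {A : Type} (R : A -> A -> Prop) : list (A * nat) -> Prop :=
| cnf_v_nil : cnf_valid R []
| cnf_v_one a n : 0 < n -> cnf_valid R [(a, n)]
| cnf_v_cons a n b m l : 0 < n -> R b a -> cnf_valid R ((b, m) :: l) ->
    cnf_valid R ((a, n) :: (b, m) :: l).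

Inductive cnf_lt {A : Type} (R : A -> A -> Prop) : list (A * nat) -> list (A * nat) -> Prop :=
| cnf_lt_nil p l : cnf_lt R [] (p :: l)
| cnf_lt_exp a b n m l l' : R a b -> cnf_lt R ((a, n) :: l) ((b, m) :: l')
| cnf_lt_coef a n m l l' : n < m -> cnf_lt R ((a, n) :: l) ((a, m) :: l')
| cnf_lt_tail p l l' : cnf_lt R l l' -> cnf_lt R (p :: l) (p :: l').

(** Elements of omega^(omega^g) in Cantor normal form. *)
Definition ww_valid (g : ordinal) (l : list (list (ocar g * nat) * nat)) : Prop :=
  cnf_valid (cnf_lt (olt g)) l /\ Forall (fun p => cnf_valid (olt g) (fst p)) l.

Definition ww_lt (g : ordinal) := cnf_lt (cnf_lt (olt g)).

(** alpha is a multiplicatively indecomposable ordinal >= omega^omega, i.e.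
    alpha is order-isomorphic to omega^(omega^g) for some ordinal g >= 1. *)
Definition mult_indec_big (a : ordinal) : Prop :=
  exists (g : ordinal) (h : ocar a -> list (list (ocar g * nat) * nat)),
    inhabited (ocar g) /\
    (forall x, ww_valid g (h x)) /\
    (forall l, ww_valid g l -> exists x, h x = l) /\
    (forall x y, olt a x y <-> ww_lt g (h x) (h y)).

Record qo := QO { car : Type; le : car -> car -> Prop }.

Definition ord_qo (a : ordinal) : qo := QO (ocar a) (fun x y => olt a x y \/ x = y).

Definition qsum (A B : qo) : qo :=
  QO (car A + car B)%type
     (fun x y => match x, y with
                 | inl a, inl b => le A a b
                 | inr a, inr b => le B a b
                 | _, _ => False end).

Definition qprod (A B : qo) : qo :=
  QO (car A * car B)%type (fun x y => le A (fst x) (fst y) /\ le B (snd x) (snd y)).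

Inductive subword {A : Type} (R : A -> A -> Prop) : list A -> list A -> Prop :=
| sw_nil l : subword R [] l
| sw_skip l1 y l2 : subword R l1 l2 -> subword R l1 (y :: l2)
| sw_keep x y l1 l2 : R x y -> subword R l1 l2 -> subword R (x :: l1) (y :: l2).

Definition qwords (A : qo) : qo := QO (list (car A)) (subword (le A)).

(** multiset embedding: an injection f with x <= f x (multisets as lists) *)
Inductive msemb {A : Type} (R : A -> A -> Prop) : list A -> list A -> Prop :=
| ms_nil l : msemb R [] l
| ms_cons x y l1 l2a l2b : R x y -> msemb R l1 (l2a ++ l2b) ->
    msemb R (x :: l1) (l2a ++ y :: l2b).

Definition qmset (A : qo) : qo := QO (list (car A)) (msemb (le A)).

Definition qmsetn (A : qo) (n : nat) : qo :=
  QO {l : list (car A) | length l = n} (fun x y => msemb (le A) (proj1_sig x) (proj1_sig y)).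

Definition qpow (A : qo) (n : nat) : qo :=
  QO {l : list (car A) | length l = n} (fun x y => Forall2 (le A) (proj1_sig x) (proj1_sig y)).

(** Hoare ordering on finite subsets (represented by lists) *)
Definition hoare {A : Type} (R : A -> A -> Prop) (S S' : list A) : Prop :=
  forall a, In a S -> exists b, In b S' /\ R a b.

Definition qpf (A : qo) : qo := QO (list (car A)) (hoare (le A)).

Inductive expr : Type :=
| EOrd (a : ordinal)
| ESum (e1 e2 : expr)
| EProd (e1 e2 : expr)
| EWords (e : expr)
| EMset (e : expr)
| EPf (e : expr).

Fixpoint sem (e : expr) : qo :=
  match e with
  | EOrd a => ord_qo a
  | ESum e1 e2 => qsum (sem e1) (sem e2)
  | EProd e1 e2 => qprod (sem e1) (sem e2)
  | EWords e1 => qwords (sem e1)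
  | EMset e1 => qmset (sem e1)
  | EPf e1 => qpf (sem e1)
  end.

Fixpoint elementary (e : expr) : Prop :=
  match e with
  | EOrd a => mult_indec_big a
  | ESum e1 e2 | EProd e1 e2 => elementary e1 /\ elementary e2
  | EWords e1 | EMset e1 | EPf e1 => elementary e1
  end.

Definition is_sum (e : expr) : Prop := match e with ESum _ _ => True | _ => False end.
Definition is_ord (e : expr) : Prop := match e with EOrd _ => True | _ => False end.

(** no subexpression is a redex of the rewriting rules *)
Fixpoint normal_form (e : expr) : Prop :=
  match e with
  | EOrd _ => True
  | ESum e1 e2 => normal_form e1 /\ normal_form e2
  | EProd e1 e2 => normal_form e1 /\ normal_form e2 /\ ~ is_sum e1 /\ ~ is_sum e2
  | EWords e1 => normal_form e1
  | EMset e1 => normal_form e1 /\ ~ is_sum e1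
  | EPf e1 => normal_form e1 /\ ~ is_sum e1 /\ ~ is_ord e1
  end.

(** * wpo-isomorphism: the quotients by x<=y<=x are isomorphic, i.e. there is
    an order-embedding f : A -> B that is surjective up to equivalence. *)
Definition wpo_iso (A B : qo) : Prop :=
  exists f : car A -> car B,
    (forall x y, le A x y <-> le B (f x) (f y)) /\
    (forall b, exists a, le B (f a) b /\ le B b (f a)).

Definition segment (a : ordinal) (t : ocar a) : qo :=
  QO {x : ocar a | olt a x t}
     (fun x y => olt a (proj1_sig x) (proj1_sig y) \/ proj1_sig x = proj1_sig y).

Fixpoint approx (e : expr) (E' : qo) : Prop :=
  match e with
  | EOrd a => exists t : ocar a, wpo_iso E' (segment a t)
  | ESum e1 e2 => exists E1 E2, approx e1 E1 /\ approx e2 E2 /\ wpo_iso E' (qsum E1 E2)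
  | EProd e1 e2 => exists E1 E2, approx e1 E1 /\ approx e2 E2 /\ wpo_iso E' (qprod E1 E2)
  | EWords e1 => exists E1 n, approx e1 E1 /\ wpo_iso E' (qpow E1 n)
  | EMset e1 => exists E1 n, approx e1 E1 /\ wpo_iso E' (qmsetn E1 n)
  | EPf e1 => exists E1, approx e1 E1 /\ wpo_iso E' (qpf E1)
  end.

Definition downset (E : qo) (S : list (car E)) : qo :=
  QO {x : car E | exists y, In y S /\ le E x y}
     (fun x y => le E (proj1_sig x) (proj1_sig y)).

Definition is_condensation (A B : qo) (f : car A -> car B) : Prop :=
  (forall b, exists a, f a = b) /\
  (forall x y, le A x y -> le B (f x) (f y)) /\
  (forall b y, le B b (f y) -> exists x, le A x y /\ f x = b).

Definition le_cond (B A : qo) : Prop := exists f : car A -> car B, is_condensation A B f.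

Definition le_st (B A : qo) : Prop :=
  exists f : car B -> car A,
    (forall x y, f x = f y -> x = y) /\ (forall x y, le B x y <-> le A (f x) (f y)).

Definition le_cond_st : qo -> qo -> Prop :=
  clos_trans qo (fun B A => le_cond B A \/ le_st B A).

(* By induction on the expression we prove a stronger claim: for every k, the ordinal sum
   k + ↓S (a k-element chain placed below ↓S) is ≤cond+st some reflexive E' <approx E; the
   case k = 0 is the theorem.  Sums and products split componentwise.  For words, multisets
   and finite sets, ↓S consists of sequences of length at most N over ↓T, where T collects
   the letters of the elements of S.  Sending a sequence over (k+1) + ↓T to the highest chain
   level occurring in it, when that level is below k, and otherwise to the sequence of its
   ↓T-entries, is a condensation onto k + (sequences over ↓T); so the induction hypothesis at
   k+1 applies, the extra chain element serving as padding.  For an ordinal ω^(ω^γ), choose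
   e > 0 with ↓S below ω^e; then i ↦ i on the chain and x ↦ ω^e + x on ↓S embed k + ↓S into
   the initial segment below ω^e·2. *)

From Stdlib Require Import List Relations Lia Arith Permutation ClassicalEpsilon Classical.
Import ListNotations.

Lemma le_cond_st_of_cond A B : le_cond A B -> le_cond_st A B.
Proof. intro H; apply t_step; left; exact H. Qed.

Lemma le_cond_st_of_st A B : le_st A B -> le_cond_st A B.
Proof. intro H; apply t_step; right; exact H. Qed.

Lemma le_cond_st_trans A B C : le_cond_st A B -> le_cond_st B C -> le_cond_st A C.
Proof. intros; eapply t_trans; eauto. Qed.

Lemma le_cond_refl A : le_cond A A.
Proof.
  exists (fun x => x); split; [|split].
  - intro b; exists b; reflexivity.
  - auto.
  - intros b y H; exists b; auto.
Qed.

Lemma le_st_refl A : le_st A A.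
Proof. exists (fun x => x); split; [auto|tauto]. Qed.

Lemma le_cond_st_map (F : qo -> qo) :
  (forall A B, le_cond A B -> le_cond (F A) (F B)) ->
  (forall A B, le_st A B -> le_st (F A) (F B)) ->
  forall A B, le_cond_st A B -> le_cond_st (F A) (F B).
Proof.
  intros Hc Hs A B H; induction H as [x y [H|H]|x y z _ IH1 _ IH2].
  - apply le_cond_st_of_cond; auto.
  - apply le_cond_st_of_st; auto.
  - eapply le_cond_st_trans; eauto.
Qed.

Lemma le_cond_st_map2 (F : qo -> qo -> qo) :
  (forall A A' B B', le_cond A A' -> le_cond B B' -> le_cond (F A B) (F A' B')) ->
  (forall A A' B B', le_st A A' -> le_st B B' -> le_st (F A B) (F A' B')) ->
  forall A A' B B', le_cond_st A A' -> le_cond_st B B' -> le_cond_st (F A B) (F A' B').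
Proof.
  intros Hc Hs A A' B B' HA HB. apply le_cond_st_trans with (F A' B).
  - apply (le_cond_st_map (fun X => F X B)); auto using le_cond_refl, le_st_refl.
  - apply (le_cond_st_map (fun X => F A' X)); auto using le_cond_refl, le_st_refl.
Qed.

Lemma le_cond_sum A A' B B' : le_cond A A' -> le_cond B B' -> le_cond (qsum A B) (qsum A' B').
Proof.
  intros [f [fs [fm fl]]] [g [gs [gm gl]]].
  exists (fun x : car (qsum A' B') => match x with inl a => inl (f a) | inr b => inr (g b) end).
  split; [|split].
  - intros [a|b]; [destruct (fs a) as [x <-]; exists (inl x)|destruct (gs b) as [x <-]; exists (inr x)];
      reflexivity.
  - intros [a|b] [a'|b']; simpl; auto.
  - intros [a|b] [a'|b']; simpl; try contradiction; intro H.
    + destruct (fl a a' H) as [x [Hx <-]]; exists (inl x); auto.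
    + destruct (gl b b' H) as [x [Hx <-]]; exists (inr x); auto.
Qed.

Lemma le_st_sum A A' B B' : le_st A A' -> le_st B B' -> le_st (qsum A B) (qsum A' B').
Proof.
  intros [f [fi fo]] [g [gi go]].
  exists (fun x : car (qsum A B) => match x with inl a => inl (f a) | inr b => inr (g b) end).
  split.
  - intros [a|b] [a'|b'] H; inversion H; f_equal; auto.
  - intros [a|b] [a'|b']; simpl; auto; tauto.
Qed.

Lemma le_cond_prod A A' B B' : le_cond A A' -> le_cond B B' -> le_cond (qprod A B) (qprod A' B').
Proof.
  intros [f [fs [fm fl]]] [g [gs [gm gl]]].
  exists (fun x : car (qprod A' B') => (f (fst x), g (snd x))).
  split; [|split].
  - intros [a b]; destruct (fs a) as [x <-], (gs b) as [y <-]; exists (x, y); reflexivity.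
  - intros [a b] [a' b'] [H1 H2]; simpl in *; auto.
  - intros [a b] [a' b'] [H1 H2]; simpl in *.
    destruct (fl a a' H1) as [x [Hx <-]], (gl b b' H2) as [y [Hy <-]]; exists (x, y); simpl; auto.
Qed.

Lemma le_st_prod A A' B B' : le_st A A' -> le_st B B' -> le_st (qprod A B) (qprod A' B').
Proof.
  intros [f [fi fo]] [g [gi go]].
  exists (fun x : car (qprod A B) => (f (fst x), g (snd x))).
  split.
  - intros [a b] [a' b'] H; inversion H; f_equal; auto.
  - intros [a b] [a' b']; simpl; rewrite fo, go; tauto.
Qed.

Lemma le_cond_st_sum A A' B B' :
  le_cond_st A A' -> le_cond_st B B' -> le_cond_st (qsum A B) (qsum A' B').
Proof. apply le_cond_st_map2; [apply le_cond_sum|apply le_st_sum]. Qed.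

Lemma le_cond_st_prod A A' B B' :
  le_cond_st A A' -> le_cond_st B B' -> le_cond_st (qprod A B) (qprod A' B').
Proof. apply le_cond_st_map2; [apply le_cond_prod|apply le_st_prod]. Qed.

Lemma map_onto {A B} (f : A -> B) : (forall b, exists a, f a = b) ->
  forall bs, exists xs, map f xs = bs.
Proof.
  intros Hs bs; induction bs as [|b bs [xs Hx]]; [exists []; reflexivity|].
  destruct (Hs b) as [a Ha]; exists (a :: xs); simpl; congruence.
Qed.

Lemma map_injective {A B} (f : A -> B) : (forall x y, f x = f y -> x = y) ->
  forall xs ys, map f xs = map f ys -> xs = ys.
Proof.
  intros Hi xs; induction xs as [|x xs IH]; intros [|y ys] H; simpl in H; try discriminate; auto.
  inversion H; f_equal; auto.
Qed.

Lemma Forall2_map {A B C D} (R : A -> B -> Prop) (R' : C -> D -> Prop) f g :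
  (forall x y, R x y -> R' (f x) (g y)) ->
  forall xs ys, Forall2 R xs ys -> Forall2 R' (map f xs) (map g ys).
Proof. intros H xs ys H2; induction H2; simpl; constructor; auto. Qed.

Lemma Forall2_map_inv {A B C D} (R : A -> B -> Prop) (R' : C -> D -> Prop) f g :
  (forall x y, R' (f x) (g y) -> R x y) ->
  forall xs ys, Forall2 R' (map f xs) (map g ys) -> Forall2 R xs ys.
Proof.
  intros H xs; induction xs as [|x xs IH]; intros [|y ys] H2; inversion H2; subst; constructor; auto.
Qed.

Lemma Forall2_refl {A} (R : A -> A -> Prop) : (forall x, R x x) -> forall l, Forall2 R l l.
Proof. intros H l; induction l; constructor; auto. Qed.

Lemma Forall2_lift {A B} (RA : A -> A -> Prop) (RB : B -> B -> Prop) (f : A -> B) :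
  (forall b y, RB b (f y) -> exists x, RA x y /\ f x = b) ->
  forall bs ys, Forall2 RB bs (map f ys) -> exists xs, Forall2 RA xs ys /\ map f xs = bs.
Proof.
  intros Hl bs; induction bs as [|b bs IH]; intros ys H.
  - exists []; inversion H; destruct ys; try discriminate; split; constructor.
  - destruct ys as [|y ys]; inversion H; subst.
    destruct (Hl _ _ H3) as [x [Hx Hfx]], (IH _ H5) as [xs [Hxs Hf]].
    exists (x :: xs); split; [constructor; auto|simpl; congruence].
Qed.

Lemma Forall_sig_list {A} (P : A -> Prop) w : Forall P w ->
  exists w' : list {x | P x}, map (@proj1_sig _ _) w' = w.
Proof.
  induction 1 as [|a w Ha Hw [w' IH]]; [exists []; auto|].
  exists (exist _ a Ha :: w'); simpl; congruence.
Qed.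

Lemma length_le_list_max {A} (F : list (list A)) s : In s F -> length s <= list_max (map (@length A) F).
Proof.
  intro Hs. assert (H := proj1 (list_max_le (map (@length A) F) _) (le_n _)).
  rewrite Forall_forall in H; apply H, in_map, Hs.
Qed.

Lemma length_subword {A} (R : A -> A -> Prop) a b : subword R a b -> length a <= length b.
Proof. induction 1; simpl; lia. Qed.

Lemma subword_of_Forall2_app {A} (R : A -> A -> Prop) a p r : Forall2 R a p -> subword R a (p ++ r).
Proof.
  induction 1; simpl; [constructor|apply sw_keep; auto].
Qed.

Lemma subword_cons_inv {A} (R : A -> A -> Prop) w c l : subword R w (c :: l) ->
  subword R w l \/ exists a w', w = a :: w' /\ R a c /\ subword R w' l.
Proof. intro H; inversion H; subst; [left; constructor|left; auto|right; eauto]. Qed.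

Lemma msemb_iff {A} (R : A -> A -> Prop) l1 l2 :
  msemb R l1 l2 <-> exists p r, Permutation l2 (p ++ r) /\ Forall2 R l1 p.
Proof.
  split.
  - intro H; induction H as [l|x y l1 l2a l2b Hxy H [p [r [Hp Hf]]]].
    + exists [], l; split; [apply Permutation_refl|constructor].
    + exists (y :: p), r; split; [|constructor; auto].
      eapply Permutation_trans; [apply Permutation_sym, Permutation_middle|].
      simpl; apply perm_skip; exact Hp.
  - intros [p [r [Hp Hf]]]; revert l2 Hp; induction Hf as [|x y l1' p' Hxy Hf IH]; intros l2 Hp.
    + constructor.
    + assert (Hin : In y l2) by (apply (Permutation_in y (Permutation_sym Hp)); simpl; auto).
      destruct (in_split _ _ Hin) as [l2a [l2b ->]].
      constructor; [exact Hxy|]. apply IH.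
      apply (Permutation_app_inv l2a l2b [] (p' ++ r) y); simpl; exact Hp.
Qed.

Lemma msemb_of_Forall2 {A} (R : A -> A -> Prop) l1 l2 : Forall2 R l1 l2 -> msemb R l1 l2.
Proof.
  intro H; apply msemb_iff; exists l2, []; rewrite app_nil_r; split; auto using Permutation_refl.
Qed.

Lemma msemb_refl {A} (R : A -> A -> Prop) : (forall x, R x x) -> forall l, msemb R l l.
Proof. intros H l; apply msemb_of_Forall2, Forall2_refl, H. Qed.

Lemma msemb_length {A} (R : A -> A -> Prop) l1 l2 : msemb R l1 l2 -> length l1 <= length l2.
Proof. intro H; induction H; simpl; [lia|rewrite length_app in *; simpl; lia]. Qed.

Lemma msemb_of_subword {A} (R : A -> A -> Prop) a b : subword R a b -> msemb R a b.
Proof.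
  induction 1 as [l|a y l2 _ IH|x y a l2 Hxy _ IH]; [constructor| |].
  - apply msemb_iff in IH as [p [r [Hp Hf]]]. apply msemb_iff; exists p, (y :: r); split; auto.
    apply Permutation_cons_app; auto.
  - apply (ms_cons R x y a [] l2); auto.
Qed.

Lemma msemb_perm_app_r {A} (R : A -> A -> Prop) a b c d :
  msemb R a b -> Permutation d (b ++ c) -> msemb R a d.
Proof.
  intros H Hd; apply msemb_iff in H as [p [r [Hp Hf]]]. apply msemb_iff; exists p, (r ++ c); split; auto.
  rewrite app_assoc; eapply Permutation_trans; [exact Hd|apply Permutation_app_tail; auto].
Qed.

Lemma msemb_map {A B} (R : A -> A -> Prop) (R' : B -> B -> Prop) f :
  (forall x y, R x y -> R' (f x) (f y)) ->
  forall xs ys, msemb R xs ys -> msemb R' (map f xs) (map f ys).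
Proof.
  intros H xs ys Hm. apply msemb_iff in Hm as [p [r [Hp Hf]]].
  apply msemb_iff; exists (map f p), (map f r); split.
  - rewrite <- map_app; apply Permutation_map; auto.
  - eapply Forall2_map; eauto.
Qed.

Lemma msemb_lift {A B} (RA : A -> A -> Prop) (RB : B -> B -> Prop) (f : A -> B) :
  (forall b y, RB b (f y) -> exists x, RA x y /\ f x = b) ->
  forall bs ys, msemb RB bs (map f ys) -> exists xs, msemb RA xs ys /\ map f xs = bs.
Proof.
  intros Hl bs ys H. apply msemb_iff in H as [p [r [Hp Hf]]].
  destruct (Permutation_map_inv _ _ (Permutation_sym Hp)) as [y' [Hy' Hpy]].
  destruct (map_eq_app _ _ _ _ (eq_sym Hy')) as [y1 [y2 [-> [<- <-]]]].
  destruct (Forall2_lift RA RB f Hl _ _ Hf) as [xs [Hxs Hm]].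
  exists xs; split; auto. apply msemb_iff; exists y1, y2; auto.
Qed.

Lemma msemb_map_inv {A B} (R : A -> A -> Prop) (R' : B -> B -> Prop) f :
  (forall x y, R' (f x) (f y) -> R x y) ->
  forall xs ys, msemb R' (map f xs) (map f ys) -> msemb R xs ys.
Proof.
  intros H xs ys Hm. apply msemb_iff in Hm as [p [r [Hp Hf]]].
  destruct (Permutation_map_inv _ _ (Permutation_sym Hp)) as [y' [Hy' Hpy]].
  destruct (map_eq_app _ _ _ _ (eq_sym Hy')) as [y1 [y2 [-> [<- <-]]]].
  apply msemb_iff; exists y1, y2; split; auto.
  eapply Forall2_map_inv; eauto.
Qed.

Lemma hoare_of_Forall2 {A} (R : A -> A -> Prop) a b : Forall2 R a b -> hoare R a b.
Proof.
  induction 1 as [|x y a b Hxy _ IH]; intros z Hz; [destruct Hz|].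
  destruct Hz as [<-|Hz]; [exists y; simpl; auto|].
  destruct (IH z Hz) as [c [Hc Hzc]]; exists c; simpl; auto.
Qed.

Lemma hoare_of_subword {A} (R : A -> A -> Prop) a b : subword R a b -> hoare R a b.
Proof.
  induction 1 as [l|a y l2 _ IH|x y a l2 Hxy _ IH]; intros z Hz; [destruct Hz| |].
  - destruct (IH z Hz) as [c [Hc Hzc]]; exists c; simpl; auto.
  - destruct Hz as [<-|Hz]; [exists y; simpl; auto|].
    destruct (IH z Hz) as [c [Hc Hzc]]; exists c; simpl; auto.
Qed.

Lemma hoare_of_msemb {A} (R : A -> A -> Prop) a b : msemb R a b -> hoare R a b.
Proof.
  intro H; apply msemb_iff in H as [p [r [Hp Hf]]]. intros z Hz.
  destruct (hoare_of_Forall2 R a p Hf z Hz) as [c [Hc Hzc]].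
  exists c; split; auto. apply (Permutation_in c (Permutation_sym Hp)), in_or_app; auto.
Qed.

Lemma hoare_map {A B} (R : A -> A -> Prop) (R' : B -> B -> Prop) f :
  (forall x y, R x y -> R' (f x) (f y)) ->
  forall xs ys, hoare R xs ys -> hoare R' (map f xs) (map f ys).
Proof.
  intros Hf xs ys H b Hb. apply in_map_iff in Hb as [a [<- Ha]].
  destruct (H a Ha) as [c [Hc Hac]]; exists (f c); split; [apply in_map|]; auto.
Qed.

Lemma hoare_lift {A B} (RA : A -> A -> Prop) (RB : B -> B -> Prop) (f : A -> B) :
  (forall b y, RB b (f y) -> exists x, RA x y /\ f x = b) ->
  forall bs ys, hoare RB bs (map f ys) -> exists xs, hoare RA xs ys /\ map f xs = bs.
Proof.
  intros Hl bs; induction bs as [|b bs IH]; intros ys H.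
  - exists []; split; [intros a []|reflexivity].
  - destruct (H b (or_introl eq_refl)) as [c [Hc Hbc]].
    apply in_map_iff in Hc as [y [<- Hy]].
    destruct (Hl _ _ Hbc) as [x [Hx Hfx]].
    destruct (IH ys) as [xs [Hxs Hf]]; [intros a Ha; apply H; simpl; auto|].
    exists (x :: xs); split; [|simpl; congruence].
    intros a [<-|Ha]; [exists y; auto|apply Hxs; auto].
Qed.

Lemma hoare_map_inv {A B} (R : A -> A -> Prop) (R' : B -> B -> Prop) f :
  (forall x y, R' (f x) (f y) -> R x y) ->
  forall xs ys, hoare R' (map f xs) (map f ys) -> hoare R xs ys.
Proof.
  intros Hf xs ys H a Ha. destruct (H (f a) (in_map _ _ _ Ha)) as [c [Hc Hac]].
  apply in_map_iff in Hc as [y [<- Hy]]. exists y; auto.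
Qed.

Lemma sig_ext {A} (P : A -> Prop) (x y : {a | P a}) : proj1_sig x = proj1_sig y -> x = y.
Proof.
  destruct x as [x p], y as [y q]; simpl; intros ->; f_equal; apply proof_irrelevance.
Qed.

Definition sized_map {A B : Type} {n} (f : A -> B) (x : {l : list A | length l = n}) :
  {l : list B | length l = n} :=
  exist _ (map f (proj1_sig x)) (eq_trans (length_map f _) (proj2_sig x)).

Lemma sized_map_onto {A B : Type} n (f : A -> B) : (forall b, exists a, f a = b) ->
  forall y : {l : list B | length l = n}, exists x, sized_map f x = y.
Proof.
  intros Hs [b Hb]. destruct (map_onto f Hs b) as [xs Hxs].
  assert (Hlen : length xs = n) by (rewrite <- Hb, <- Hxs, length_map; reflexivity).
  exists (exist _ xs Hlen). apply sig_ext; exact Hxs.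
Qed.

Lemma sized_map_injective {A B : Type} n (f : A -> B) : (forall x y, f x = f y -> x = y) ->
  forall x y : {l : list A | length l = n}, sized_map f x = sized_map f y -> x = y.
Proof.
  intros Hi x y H; apply sig_ext; apply (f_equal (@proj1_sig _ _)) in H.
  eapply map_injective; eauto.
Qed.

Lemma le_cond_pow A B n : le_cond A B -> le_cond (qpow A n) (qpow B n).
Proof.
  intros [f [Hs [Hm Hl]]]. exists (sized_map f). split; [|split].
  - apply sized_map_onto, Hs.
  - intros x y; apply Forall2_map, Hm.
  - intros [b Hb] [y Hy] H.
    destruct (Forall2_lift _ _ f Hl _ _ H) as [xs [Hxs Hf]].
    assert (Hlen : length xs = n) by (rewrite (Forall2_length Hxs); exact Hy).
    exists (exist _ xs Hlen); split; [exact Hxs|apply sig_ext; exact Hf].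
Qed.

Lemma le_st_pow A B n : le_st A B -> le_st (qpow A n) (qpow B n).
Proof.
  intros [f [Hi Ho]]. exists (sized_map f). split; [apply sized_map_injective, Hi|].
  intros x y; split; [apply Forall2_map|apply Forall2_map_inv]; intros; apply Ho; auto.
Qed.

Lemma le_cond_msetn A B n : le_cond A B -> le_cond (qmsetn A n) (qmsetn B n).
Proof.
  intros [f [Hs [Hm Hl]]]. exists (sized_map f). split; [|split].
  - apply sized_map_onto, Hs.
  - intros x y; apply msemb_map, Hm.
  - intros [b Hb] [y Hy] H.
    simpl in H; destruct (msemb_lift _ _ f Hl _ _ H) as [xs [Hxs Hf]].
    assert (Hlen : length xs = n) by (rewrite <- Hb, <- Hf, length_map; reflexivity).
    exists (exist _ xs Hlen); split; [exact Hxs|apply sig_ext; exact Hf].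
Qed.

Lemma le_st_msetn A B n : le_st A B -> le_st (qmsetn A n) (qmsetn B n).
Proof.
  intros [f [Hi Ho]]. exists (sized_map f). split; [apply sized_map_injective, Hi|].
  intros x y; split; [apply msemb_map|apply msemb_map_inv]; intros; apply Ho; auto.
Qed.

Lemma le_cond_pf A B : le_cond A B -> le_cond (qpf A) (qpf B).
Proof.
  intros [f [Hs [Hm Hl]]]. exists (map f). split; [|split].
  - apply map_onto, Hs.
  - apply hoare_map, Hm.
  - apply hoare_lift, Hl.
Qed.

Lemma le_st_pf A B : le_st A B -> le_st (qpf A) (qpf B).
Proof.
  intros [f [Hi Ho]]. exists (map f). split; [apply map_injective, Hi|].
  intros x y; split; [apply hoare_map|apply hoare_map_inv]; intros; apply Ho; auto.
Qed.

Lemma le_cond_st_pow A B n : le_cond_st A B -> le_cond_st (qpow A n) (qpow B n).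
Proof.
  apply (le_cond_st_map (fun X => qpow X n)); intros; [apply le_cond_pow|apply le_st_pow]; auto.
Qed.

Lemma le_cond_st_msetn A B n : le_cond_st A B -> le_cond_st (qmsetn A n) (qmsetn B n).
Proof.
  apply (le_cond_st_map (fun X => qmsetn X n)); intros; [apply le_cond_msetn|apply le_st_msetn]; auto.
Qed.

Lemma le_cond_st_pf A B : le_cond_st A B -> le_cond_st (qpf A) (qpf B).
Proof. apply le_cond_st_map; [apply le_cond_pf|apply le_st_pf]. Qed.

Definition subqo (X : qo) (P : car X -> Prop) : qo :=
  QO {x | P x} (fun a b => le X (proj1_sig a) (proj1_sig b)).

(* [downset X F] is convertible to [subqo X (in_downset X F)]. *)
Definition in_downset (X : qo) (F : list (car X)) (x : car X) : Prop :=
  exists y, In y F /\ le X x y.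

Lemma le_st_subqo X (P Q : car X -> Prop) : (forall x, P x -> Q x) -> le_st (subqo X P) (subqo X Q).
Proof.
  intro PQ. exists (fun x => exist Q (proj1_sig x) (PQ _ (proj2_sig x))). split; [|simpl; tauto].
  intros x y E; apply sig_ext; exact (f_equal (@proj1_sig _ _) E).
Qed.

Lemma hoare_concat_in_downset (X : qo) (F : list (list (car X))) s w :
  In s F -> hoare (le X) w s -> Forall (in_downset X (concat F)) w.
Proof.
  intros Hs H; apply Forall_forall; intros a Ha. destruct (H a Ha) as [b [Hb Hab]].
  exists b; split; auto. apply in_concat; eauto.
Qed.

Lemma le_st_downset_words (X : qo) (F : list (list (car X))) :
  le_st (downset (qwords X) F)
        (subqo (QO (list (car X)) (subword (le X)))
               (fun w => Forall (in_downset X (concat F)) w /\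
                         length w <= S (list_max (map (@length _) F)))).
Proof.
  apply le_st_subqo; intros w [s [Hs Hw]]; split.
  - eapply hoare_concat_in_downset; [exact Hs|apply hoare_of_subword, Hw].
  - pose proof (length_subword _ _ _ Hw); pose proof (length_le_list_max F s Hs); lia.
Qed.

Lemma le_st_downset_msets (X : qo) (F : list (list (car X))) :
  le_st (downset (qmset X) F)
        (subqo (QO (list (car X)) (msemb (le X)))
               (fun w => Forall (in_downset X (concat F)) w /\
                         length w <= S (list_max (map (@length _) F)))).
Proof.
  apply le_st_subqo; intros w [s [Hs Hw]]; split.
  - eapply hoare_concat_in_downset; [exact Hs|apply hoare_of_msemb, Hw].
  - pose proof (msemb_length _ _ _ Hw); pose proof (length_le_list_max F s Hs); lia.
Qed.

Lemma le_st_downset_pf (X : qo) (F : list (list (car X))) :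
  le_st (downset (qpf X) F)
        (subqo (QO (list (car X)) (hoare (le X))) (fun w => Forall (in_downset X (concat F)) w /\ True)).
Proof.
  apply le_st_subqo; intros w [s [Hs Hw]]; split; [eapply hoare_concat_in_downset; eauto|exact I].
Qed.

Lemma le_st_downset_prod (A B : qo) (F : list (car (qprod A B))) :
  le_st (downset (qprod A B) F) (qprod (downset A (map fst F)) (downset B (map snd F))).
Proof.
  unshelve eexists (fun x => (exist _ (fst (proj1_sig x)) _, exist _ (snd (proj1_sig x)) _)).
  - destruct x as [x [y [Hy [H1 H2]]]]; exists (fst y); split; auto; apply in_map; auto.
  - destruct x as [x [y [Hy [H1 H2]]]]; exists (snd y); split; auto; apply in_map; auto.
  - split.
    + intros [[a b] p] [[a' b'] p'] E; inversion E; subst; apply sig_ext; reflexivity.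
    + intros [[a b] p] [[a' b'] p']; simpl; tauto.
Qed.

Definition lefts {A B : Type} (l : list (A + B)) : list A :=
  flat_map (fun u => match u with inl a => [a] | inr _ => [] end) l.

Definition rights {A B : Type} (l : list (A + B)) : list B :=
  flat_map (fun u => match u with inl _ => [] | inr b => [b] end) l.

Lemma in_downset_inl (A B : qo) (F : list (car (qsum A B))) a :
  in_downset (qsum A B) F (inl a) <-> in_downset A (lefts F) a.
Proof.
  unfold in_downset, lefts; split.
  - intros [[y|y] [Hy H]]; [|contradiction]. exists y; split; auto.
    apply in_flat_map; exists (inl y); simpl; auto.
  - intros [y [Hy H]]. apply in_flat_map in Hy as [[z|z] [Hz Hy]]; simpl in Hy; [|contradiction].
    destruct Hy as [<-|[]]; exists (inl z); auto.
Qed.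

Lemma in_downset_inr (A B : qo) (F : list (car (qsum A B))) b :
  in_downset (qsum A B) F (inr b) <-> in_downset B (rights F) b.
Proof.
  unfold in_downset, rights; split.
  - intros [[y|y] [Hy H]]; [contradiction|]. exists y; split; auto.
    apply in_flat_map; exists (inr y); simpl; auto.
  - intros [y [Hy H]]. apply in_flat_map in Hy as [[z|z] [Hz Hy]]; simpl in Hy; [contradiction|].
    destruct Hy as [<-|[]]; exists (inr z); auto.
Qed.

(** * A chain below a quasi-order *)

(* The ordinal sum [k + X]: a chain [0 < 1 < ... < k-1] placed below all of [X]. *)
Definition chain_below (k : nat) (X : qo) : qo :=
  QO ({i : nat | i < k} + car X)%type
     (fun u v => match u, v with
       | inl i, inl j => proj1_sig i <= proj1_sig j
       | inl _, inr _ => True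
       | inr _, inl _ => False
       | inr a, inr b => le X a b end).

Definition level {k X} (u : car (chain_below k X)) : nat :=
  match u with inl i => proj1_sig i | inr _ => k end.

Definition max_level {k X} (l : list (car (chain_below k X))) : nat := list_max (map level l).

Definition tops {k X} (l : list (car (chain_below k X))) : list (car X) :=
  flat_map (fun u => match u with inl _ => [] | inr a => [a] end) l.

Definition chain_elt {k X} (m : nat) : car (chain_below (S k) X) :=
  inl (exist _ (Nat.min m k) (proj2 (Nat.lt_succ_r _ _) (Nat.le_min_r m k))).

Section ChainBelow.
Variables (k : nat) (X : qo).
Notation C := (chain_below k X).

Lemma level_le_k (u : car C) : level u <= k.
Proof. destruct u as [[i Hi]|a]; simpl; lia. Qed.

Lemma level_mono (u v : car C) : le C u v -> level u <= level v.
Proof. destruct u as [[i Hi]|a], v as [[j Hj]|b]; simpl; intuition lia. Qed.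

Lemma level_le_max_level (l : list (car C)) u : In u l -> level u <= max_level l.
Proof.
  intro Hu; unfold max_level; induction l as [|v l IH]; simpl in *; [tauto|].
  destruct Hu as [->|Hu]; [lia|specialize (IH Hu); lia].
Qed.

Lemma max_level_le (l : list (car C)) m : (forall u, In u l -> level u <= m) -> max_level l <= m.
Proof.
  intro H; apply list_max_le, Forall_forall; intros n Hn.
  apply in_map_iff in Hn as [u [<- Hu]]; auto.
Qed.

Lemma max_level_le_k (l : list (car C)) : max_level l <= k.
Proof. apply max_level_le; intros; apply level_le_k. Qed.

Lemma max_level_cons (u : car C) l : max_level (u :: l) = Nat.max (level u) (max_level l).
Proof. reflexivity. Qed.

Lemma max_level_app (l1 l2 : list (car C)) :
  max_level (l1 ++ l2) = Nat.max (max_level l1) (max_level l2).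
Proof. unfold max_level; rewrite map_app; apply list_max_app. Qed.

Lemma max_level_hoare (x y : list (car C)) : hoare (le C) x y -> max_level x <= max_level y.
Proof.
  intro H; apply max_level_le; intros u Hu. destruct (H u Hu) as [v [Hv Huv]].
  apply level_mono in Huv. apply level_le_max_level in Hv. lia.
Qed.

Lemma tops_app (l1 l2 : list (car C)) : tops (l1 ++ l2) = tops l1 ++ tops l2.
Proof. apply flat_map_app. Qed.

Lemma tops_inr (w : list (car X)) : tops (map inr w : list (car C)) = w.
Proof. induction w; simpl; f_equal; auto. Qed.

Lemma In_tops (l : list (car C)) a : In a (tops l) <-> In (inr a) l.
Proof.
  unfold tops; rewrite in_flat_map; split.
  - intros [[i|b] [Hu Ha]]; simpl in Ha; [contradiction|destruct Ha as [<-|[]]; exact Hu].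
  - intro H; exists (inr a); simpl; auto.
Qed.

Lemma tops_perm (l l' : list (car C)) : Permutation l l' -> Permutation (tops l) (tops l').
Proof. intro H; unfold tops; apply Permutation_flat_map; auto. Qed.

End ChainBelow.

Section ChainElements.
Variables (k : nat) (X : qo).
Notation C := (chain_below (S k) X).

Lemma level_chain_elt m : level (@chain_elt k X m) = Nat.min m k.
Proof. reflexivity. Qed.

Lemma chain_elt_le m (u : car C) : Nat.min m k <= level u -> le C (chain_elt m) u.
Proof. destruct u as [[i Hi]|a]; simpl; auto. Qed.

Lemma tops_chain_elts (l : list nat) : tops (map (@chain_elt k X) l) = [].
Proof. induction l; simpl; auto. Qed.

Lemma max_level_repeat_chain_elt m n :
  0 < n -> max_level (repeat (@chain_elt k X m) n) = Nat.min m k.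
Proof.
  intro Hn; destruct n as [|n]; [lia|]; clear Hn.
  induction n as [|n IH]; cbn [repeat] in *; rewrite max_level_cons, level_chain_elt;
    [unfold max_level; simpl; lia|rewrite IH; lia].
Qed.

Definition lower_to (j : nat) (y : list (car C)) : list (car C) :=
  map (fun u => chain_elt (Nat.min j (level u))) y.

Lemma lower_to_Forall2 j y : Forall2 (le C) (lower_to j y) y.
Proof. induction y; simpl; constructor; auto. apply chain_elt_le. lia. Qed.

Lemma max_level_lower_to j y : j <= k -> max_level (lower_to j y) = Nat.min j (max_level y).
Proof.
  intro Hj; induction y as [|u y IH]; [unfold max_level; simpl; lia|].
  cbn [lower_to map]; rewrite !max_level_cons, level_chain_elt.
  unfold lower_to in IH; rewrite IH. pose proof (level_le_k (S k) X u); lia.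
Qed.

Lemma tops_lower_to j y : tops (lower_to j y) = [].
Proof. unfold lower_to; rewrite <- map_map; apply tops_chain_elts. Qed.

Lemma length_lower_to j y : length (lower_to j y) = length y.
Proof. apply length_map. Qed.

End ChainElements.

Lemma le_st_chain_below k A B : le_st A B -> le_st (chain_below k A) (chain_below k B).
Proof.
  intros [f [Hi Ho]].
  exists (fun u : car (chain_below k A) => match u with inl i => inl i | inr a => inr (f a) end).
  split.
  - intros [i|a] [j|b] E; inversion E; f_equal; auto.
  - intros [i|a] [j|b]; simpl; try tauto; apply Ho.
Qed.

Lemma le_st_chain_below_top k X : le_st X (chain_below k X).
Proof.
  exists (fun x => inr x : car (chain_below k X)); split; [intros x y E; inversion E; auto|simpl; tauto].
Qed.

Lemma chain_below_refl k X : (forall x, le X x x) -> forall u, le (chain_below k X) u u.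
Proof. intros H [[i Hi]|x]; simpl; auto. Qed.

Lemma chain_below_total k X : (forall x y, le X x y \/ le X y x) ->
  forall u v, le (chain_below k X) u v \/ le (chain_below k X) v u.
Proof. intros H [[i Hi]|x] [[j Hj]|y]; simpl; auto; lia. Qed.

Definition merge_chains {A B : qo} (F : list (car (qsum A B))) k
  (x : car (qsum (chain_below k (downset A (lefts F))) (chain_below k (downset B (rights F))))) :
  car (chain_below k (downset (qsum A B) F)) :=
  match x with
  | inl (inl i) | inr (inl i) => inl i
  | inl (inr a) => inr (exist _ (inl (proj1_sig a)) (proj2 (in_downset_inl A B F _) (proj2_sig a)))
  | inr (inr b) => inr (exist _ (inr (proj1_sig b)) (proj2 (in_downset_inr A B F _) (proj2_sig b)))
  end.

Lemma le_cond_chain_below_downset_sum (A B : qo) (F : list (car (qsum A B))) k :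
  le_cond (chain_below k (downset (qsum A B) F))
          (qsum (chain_below k (downset A (lefts F))) (chain_below k (downset B (rights F)))).
Proof.
  exists (merge_chains F k). split; [|split].
  - intros [i|[[a|b] p]].
    + exists (inl (inl i)); reflexivity.
    + exists (inl (inr (exist _ a (proj1 (in_downset_inl A B F a) p)))).
      simpl; f_equal; apply sig_ext; reflexivity.
    + exists (inr (inr (exist _ b (proj1 (in_downset_inr A B F b) p)))).
      simpl; f_equal; apply sig_ext; reflexivity.
  - intros [[i|a]|[i|b]] [[j|a']|[j|b']]; simpl; tauto.
  - intros [i|[[a|b] p]] [[j|[a' pa']]|[j|[b' pb']]] H; simpl in H; try contradiction.
    + exists (inl (inl i)); split; [exact H|reflexivity].
    + exists (inl (inl i)); split; [exact I|reflexivity].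
    + exists (inr (inl i)); split; [exact H|reflexivity].
    + exists (inr (inl i)); split; [exact I|reflexivity].
    + exists (inl (inr (exist _ a (proj1 (in_downset_inl A B F a) p)))); split; [exact H|].
      simpl; f_equal; apply sig_ext; reflexivity.
    + exists (inr (inr (exist _ b (proj1 (in_downset_inr A B F b) p)))); split; [exact H|].
      simpl; f_equal; apply sig_ext; reflexivity.
Qed.

Definition pair_chains {k} {A B : qo} (x : car (qprod (chain_below k A) (chain_below k B))) :
  car (chain_below k (qprod A B)) :=
  match x with
  | (inl i, inl j) => inl (exist _ (Nat.min (proj1_sig i) (proj1_sig j))
                           (Nat.le_lt_trans _ _ _ (Nat.le_min_l _ _) (proj2_sig i)))
  | (inl i, inr _) => inl i
  | (inr _, inl j) => inl j
  | (inr a, inr b) => inr (a, b)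
  end.

Lemma le_cond_chain_below_prod (A B : qo) k :
  le_cond (chain_below k (qprod A B)) (qprod (chain_below k A) (chain_below k B)).
Proof.
  exists pair_chains. split; [|split].
  - intros [i|[a b]].
    + exists (inl i, inl i). simpl. f_equal. apply sig_ext; simpl; lia.
    + exists (inr a, inr b); reflexivity.
  - intros [[[i Hi]|a] [[j Hj]|b]] [[[i' Hi']|a'] [[j' Hj']|b']] [H1 H2]; simpl in *; try tauto; lia.
  - intros [[i Hi]|[a b]] [[[i' Hi']|a'] [[j' Hj']|b']] H; simpl in H; try contradiction;
      [| | | |exists (inr a, inr b); split; [exact H|reflexivity]];
      exists (inl (exist _ i Hi), inl (exist _ i Hi));
      (split; [simpl; split; auto; lia|simpl; f_equal; apply sig_ext; simpl; lia]).
Qed.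

(** * Collapsing sequences over a chain *)

Definition top_vals {k} {X : qo} {P : car X -> Prop} (l : list (car (chain_below k (subqo X P)))) :
  list (car X) := map (@proj1_sig _ _) (tops l).

Lemma Forall_top_vals {k} {X : qo} {P : car X -> Prop} (l : list (car (chain_below k (subqo X P)))) :
  Forall P (top_vals l).
Proof.
  apply Forall_forall; intros a Ha. apply in_map_iff in Ha as [[b Hb] [<- _]]; exact Hb.
Qed.

Section Collapse.
Variables (X : qo) (P : car X -> Prop) (k : nat).
Notation D := (chain_below (S k) (subqo X P)).
Variables (L : qo) (ul : car L -> list (car D)).
Variables (R : list (car X) -> list (car X) -> Prop) (Q : list (car X) -> Prop).
Notation W := (subqo (QO (list (car X)) R) (fun w => Forall P w /\ Q w)).

Hypothesis Q_nil : Q [].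
Hypothesis Q_top_vals : forall x, Q (top_vals (ul x)).
Hypothesis max_level_mono : forall x y, le L x y -> max_level (ul x) <= max_level (ul y).
Hypothesis top_vals_mono : forall x y, le L x y -> R (top_vals (ul x)) (top_vals (ul y)).
Hypothesis lower_exists : forall j y, j <= k ->
  exists x, le L x y /\ max_level (ul x) = Nat.min j (max_level (ul y)).
Hypothesis top_vals_onto : forall w, Forall P w -> Q w ->
  exists x, k <= max_level (ul x) /\ top_vals (ul x) = w.
Hypothesis top_vals_lift : forall y w, k <= max_level (ul y) -> Forall P w -> R w (top_vals (ul y)) ->
  exists x, le L x y /\ k <= max_level (ul x) /\ top_vals (ul x) = w.

Definition collapse (x : car L) : car (chain_below k W) :=
  match lt_dec (max_level (ul x)) k with
  | left H => inl (exist (fun i => i < k) _ H)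
  | right _ => inr (exist _ (top_vals (ul x)) (conj (Forall_top_vals _) (Q_top_vals x)))
  end.

Lemma collapse_chain x (i : {i | i < k}) : proj1_sig i = max_level (ul x) -> collapse x = inl i.
Proof.
  intro E; unfold collapse; destruct (lt_dec (max_level (ul x)) k) as [H|H].
  - f_equal; apply sig_ext; auto.
  - destruct i; simpl in E; lia.
Qed.

Lemma collapse_top x (w : car W) :
  k <= max_level (ul x) -> proj1_sig w = top_vals (ul x) -> collapse x = inr w.
Proof.
  intros Hk E; unfold collapse; destruct (lt_dec (max_level (ul x)) k); [lia|].
  f_equal; apply sig_ext; auto.
Qed.

Lemma le_collapse_chain x (i : {i | i < k}) :
  le (chain_below k W) (inl i) (collapse x) -> proj1_sig i <= max_level (ul x).
Proof.
  unfold collapse; destruct (lt_dec (max_level (ul x)) k); simpl; [auto|].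
  destruct i; simpl; lia.
Qed.

Lemma le_collapse_top x (w : car W) :
  le (chain_below k W) (inr w) (collapse x) ->
  k <= max_level (ul x) /\ R (proj1_sig w) (top_vals (ul x)).
Proof.
  unfold collapse; destruct (lt_dec (max_level (ul x)) k); simpl; [tauto|]. split; [lia|auto].
Qed.

Lemma collapse_mono x y : le L x y -> le (chain_below k W) (collapse x) (collapse y).
Proof.
  intro H. pose proof (max_level_mono x y H). unfold collapse.
  destruct (lt_dec (max_level (ul x)) k), (lt_dec (max_level (ul y)) k); simpl; auto; lia.
Qed.

Lemma le_cond_collapse : le_cond (chain_below k W) L.
Proof.
  exists collapse. split; [|split; [exact collapse_mono|]].
  - intros [i|[w [Pw Qw]]].
    + destruct (top_vals_onto [] (Forall_nil P) Q_nil) as [y [Hy _]].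
      destruct (lower_exists (proj1_sig i) y) as [x [_ Hx]]; [destruct i; simpl; lia|].
      exists x; apply collapse_chain.
      pose proof (max_level_le_k _ _ (ul y)); destruct i; simpl in *; lia.
    + destruct (top_vals_onto w Pw Qw) as [x [Hx E]]. exists x; apply collapse_top; auto.
  - intros [i|w] y H.
    + apply le_collapse_chain in H.
      destruct (lower_exists (proj1_sig i) y) as [x [Hxy Hx]]; [destruct i; simpl; lia|].
      exists x; split; auto. apply collapse_chain; lia.
    + apply le_collapse_top in H as [Hk Hw].
      destruct (top_vals_lift y (proj1_sig w) Hk (proj1 (proj2_sig w)) Hw) as [x [Hxy [Hx E]]].
      exists x; split; auto. apply collapse_top; auto.
Qed.

End Collapse.

Section ListsOverChain.
Variables (X : qo) (P : car X -> Prop) (k : nat).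
Notation D := (chain_below (S k) (subqo X P)).

Lemma top_vals_app (l1 l2 : list (car D)) : top_vals (l1 ++ l2) = top_vals l1 ++ top_vals l2.
Proof. unfold top_vals; rewrite tops_app, map_app; reflexivity. Qed.

Lemma top_vals_inr (w : list (car (subqo X P))) :
  top_vals (map inr w : list (car D)) = map (@proj1_sig _ _) w.
Proof. unfold top_vals; rewrite tops_inr; reflexivity. Qed.

Lemma top_vals_lower_to j (y : list (car D)) : top_vals (lower_to k _ j y) = [].
Proof. unfold top_vals; rewrite tops_lower_to; reflexivity. Qed.

Lemma length_top_vals (l : list (car D)) : length (top_vals l) <= length l.
Proof.
  unfold top_vals, tops; rewrite length_map.
  induction l as [|[i|a] l IH]; cbn [flat_map app length]; lia.
Qed.

Lemma In_top_vals (l : list (car D)) a : In a (top_vals l) -> exists b, In (inr b) l /\ proj1_sig b = a.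
Proof.
  intro H; apply in_map_iff in H as [b [<- Hb]].
  exists b; split; auto; apply (In_tops (S k) (subqo X P)); auto.
Qed.

Lemma Permutation_top_vals (y : list (car D)) m :
  Permutation (top_vals y) m -> exists y', Permutation y y' /\ top_vals y' = m.
Proof.
  intro H. destruct (Permutation_map_inv _ _ (Permutation_sym H)) as [t [-> Ht]].
  set (c := flat_map (fun u : car D => match u with inl i => [inl i : car D] | inr _ => [] end) y).
  assert (Hy : Permutation y (map inr (tops y) ++ c)).
  { unfold c, tops; clear; induction y as [|[i|a] y IH]; cbn [flat_map app map]; auto.
    apply Permutation_cons_app; auto. }
  assert (Hc : tops c = []) by (unfold c, tops; clear; induction y as [|[i|a] y IH]; auto).
  exists (map inr t ++ c); split.
  - eapply Permutation_trans; [exact Hy|]. apply Permutation_app_tail, Permutation_map, Ht.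
  - unfold top_vals; rewrite tops_app, Hc, app_nil_r, tops_inr; reflexivity.
Qed.

Lemma top_vals_Forall2_subword (x y : list (car D)) :
  Forall2 (le D) x y -> subword (le X) (top_vals x) (top_vals y).
Proof.
  induction 1 as [|[i|a] [j|b] x y H _ IH]; cbn in *; try contradiction.
  - constructor.
  - exact IH.
  - apply sw_skip; exact IH.
  - apply sw_keep; auto.
Qed.

Lemma top_vals_msemb (x y : list (car D)) :
  msemb (le D) x y -> msemb (le X) (top_vals x) (top_vals y).
Proof.
  intro H; apply msemb_iff in H as [p [r [Hp Hf]]].
  apply (msemb_perm_app_r _ _ (top_vals p) (top_vals r)).
  - apply msemb_of_subword, top_vals_Forall2_subword, Hf.
  - rewrite <- top_vals_app. unfold top_vals; apply Permutation_map, (tops_perm (S k) (subqo X P)), Hp.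
Qed.

Lemma top_vals_hoare (x y : list (car D)) :
  hoare (le D) x y -> hoare (le X) (top_vals x) (top_vals y).
Proof.
  intros H a Ha. apply In_top_vals in Ha as [b [Hb <-]].
  destruct (H _ Hb) as [[i|c] [Hc Hbc]]; [contradiction|].
  exists (proj1_sig c); split; [apply in_map, (In_tops (S k) (subqo X P)), Hc|exact Hbc].
Qed.

Lemma top_vals_subword_lift (y : list (car D)) w : Forall P w -> subword (le X) w (top_vals y) ->
  exists x, Forall2 (le D) x y /\ top_vals x = w /\ Nat.min (max_level y) k <= max_level x.
Proof.
  revert w; induction y as [|[i|b] y IH]; intros w Pw Hw.
  - inversion Hw; subst.
    exists []; split; [constructor|split; [reflexivity|unfold max_level; simpl; lia]].
  - destruct (IH w Pw Hw) as [x [H1 [H2 H3]]].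
    exists (inl i :: x); split; [constructor; simpl; auto|split; [exact H2|]].
    rewrite !max_level_cons; lia.
  - apply subword_cons_inv in Hw as [Hw|[a [w' [-> [Hab Hw]]]]].
    + destruct (IH w Pw Hw) as [x [H1 [H2 H3]]].
      exists (chain_elt k :: x); split; [constructor; simpl; auto|split; [exact H2|]].
      rewrite !max_level_cons, level_chain_elt; simpl; lia.
    + inversion Pw as [|a' w'' Pa Pw']; subst.
      destruct (IH w' Pw' Hw) as [x [H1 [H2 H3]]].
      exists (inr (exist _ a Pa) :: x); split; [constructor; simpl; auto|].
      split; [unfold top_vals in *; simpl; congruence|rewrite !max_level_cons; cbn [level]; lia].
Qed.

Lemma top_vals_msemb_lift (y : list (car D)) w : Forall P w -> msemb (le X) w (top_vals y) ->
  exists x, msemb (le D) x y /\ length x = length y /\ top_vals x = w /\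
            Nat.min (max_level y) k <= max_level x.
Proof.
  intros Pw Hw; apply msemb_iff in Hw as [p [r [Hp Hf]]].
  destruct (Permutation_top_vals y _ Hp) as [y' [Hy Ey']].
  destruct (top_vals_subword_lift y' w Pw) as [x [H1 [H2 H3]]].
  { rewrite Ey'; apply subword_of_Forall2_app, Hf. }
  exists x; split; [|split; [|split; [exact H2|]]].
  - apply msemb_iff; exists y', []; rewrite app_nil_r; auto.
  - rewrite (Forall2_length H1); apply Permutation_length, Permutation_sym, Hy.
  - unfold max_level in *; rewrite (Permutation_list_max (Permutation_map level Hy)); exact H3.
Qed.

Lemma top_vals_hoare_lift (y : list (car D)) w : Forall P w -> hoare (le X) w (top_vals y) ->
  exists x, hoare (le D) x y /\ top_vals x = w /\ Nat.min (max_level y) k <= max_level x.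
Proof.
  intros Pw Hw. destruct (Forall_sig_list P w Pw) as [w' <-].
  exists (map inr w' ++ lower_to k _ k y); split; [|split].
  - intros u Hu; apply in_app_or in Hu as [Hu|Hu].
    + apply in_map_iff in Hu as [a [<- Ha]].
      destruct (Hw (proj1_sig a) (in_map _ _ _ Ha)) as [c [Hc Hac]].
      apply In_top_vals in Hc as [b [Hb <-]]. exists (inr b); auto.
    + apply (hoare_of_Forall2 _ _ _ (lower_to_Forall2 k _ k y)), Hu.
  - rewrite top_vals_app, top_vals_inr, top_vals_lower_to, app_nil_r; reflexivity.
  - rewrite max_level_app, max_level_lower_to; lia.
Qed.

Lemma sized_top_vals_onto N w : 0 < N -> Forall P w -> length w <= N ->
  exists l : list (car D), length l = N /\ k <= max_level l /\ top_vals l = w.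
Proof.
  intros HN Pw Hlen. destruct (Forall_sig_list P w Pw) as [w' <-]. rewrite length_map in Hlen.
  exists (map inr w' ++ repeat (@chain_elt k (subqo X P) k) (N - length w')); split; [|split].
  - rewrite length_app, length_map, repeat_length; lia.
  - rewrite max_level_app. destruct w' as [|a w'].
    + rewrite max_level_repeat_chain_elt; simpl; lia.
    + enough (S k <= max_level (map inr (a :: w') : list (car D))) by lia.
      apply (level_le_max_level (S k) (subqo X P) _ (inr a)); left; reflexivity.
  - rewrite top_vals_app, top_vals_inr.
    unfold top_vals; rewrite <- map_repeat, tops_chain_elts, app_nil_r; reflexivity.
Qed.

Lemma sized_lower_exists N j (y : {l : list (car D) | length l = N}) : j <= k ->
  exists x : {l : list (car D) | length l = N},
    Forall2 (le D) (proj1_sig x) (proj1_sig y) /\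
    max_level (proj1_sig x) = Nat.min j (max_level (proj1_sig y)).
Proof.
  intro Hj; destruct y as [y Hy].
  exists (exist _ (lower_to k _ j y) (eq_trans (length_lower_to k _ j y) Hy)).
  split; [exact (lower_to_Forall2 k (subqo X P) j y)|exact (max_level_lower_to k (subqo X P) j y Hj)].
Qed.

End ListsOverChain.

Lemma le_cond_collapse_words (X : qo) (P : car X -> Prop) k N : 0 < N ->
  le_cond (chain_below k (subqo (QO (list (car X)) (subword (le X)))
                                (fun w => Forall P w /\ length w <= N)))
          (qpow (chain_below (S k) (subqo X P)) N).
Proof.
  intro HN. apply (le_cond_collapse X P k (qpow _ N) (@proj1_sig _ _)).
  - simpl; lia.
  - intros [l Hl]; simpl; rewrite <- Hl; apply length_top_vals.
  - intros x y H; apply max_level_hoare, hoare_of_Forall2, H.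
  - intros x y; apply top_vals_Forall2_subword.
  - intros j y Hj; apply sized_lower_exists, Hj.
  - intros w Pw Hw; destruct (sized_top_vals_onto X P k N w HN Pw Hw) as [l [Hl [Hk E]]].
    exists (exist _ l Hl); auto.
  - intros [y Hy] w Hk Pw Hw; simpl in *.
    destruct (top_vals_subword_lift X P k y w Pw Hw) as [x [H1 [H2 H3]]].
    exists (exist _ x (eq_trans (Forall2_length H1) Hy)); simpl; split; [exact H1|split; [lia|exact H2]].
Qed.

Lemma le_cond_collapse_msets (X : qo) (P : car X -> Prop) k N : 0 < N ->
  le_cond (chain_below k (subqo (QO (list (car X)) (msemb (le X)))
                                (fun w => Forall P w /\ length w <= N)))
          (qmsetn (chain_below (S k) (subqo X P)) N).
Proof.
  intro HN. apply (le_cond_collapse X P k (qmsetn _ N) (@proj1_sig _ _)).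
  - simpl; lia.
  - intros [l Hl]; simpl; rewrite <- Hl; apply length_top_vals.
  - intros x y H; apply max_level_hoare, hoare_of_msemb, H.
  - intros x y; apply top_vals_msemb.
  - intros j y Hj; destruct (sized_lower_exists X P k N j y Hj) as [x [H1 H2]].
    exists x; split; [apply msemb_of_Forall2, H1|exact H2].
  - intros w Pw Hw; destruct (sized_top_vals_onto X P k N w HN Pw Hw) as [l [Hl [Hk E]]].
    exists (exist _ l Hl); auto.
  - intros [y Hy] w Hk Pw Hw; simpl in *.
    destruct (top_vals_msemb_lift X P k y w Pw Hw) as [x [H1 [H2 [H3 H4]]]].
    exists (exist _ x (eq_trans H2 Hy)); simpl; split; [exact H1|split; [lia|exact H3]].
Qed.

Lemma le_cond_collapse_pf (X : qo) (P : car X -> Prop) k :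
  le_cond (chain_below k (subqo (QO (list (car X)) (hoare (le X))) (fun w => Forall P w /\ True)))
          (qpf (chain_below (S k) (subqo X P))).
Proof.
  apply (le_cond_collapse X P k (qpf _) (fun l => l)); auto.
  - apply max_level_hoare.
  - apply top_vals_hoare.
  - intros j y Hj; exists (lower_to k _ j y); split.
    + apply hoare_of_Forall2, lower_to_Forall2.
    + apply max_level_lower_to, Hj.
  - intros w Pw _; destruct (sized_top_vals_onto X P k (S (length w)) w) as [l [_ HE]]; eauto; lia.
  - intros y w Hk Pw Hw; destruct (top_vals_hoare_lift X P k y w Pw Hw) as [x [H1 [H2 H3]]].
    exists x; split; [exact H1|split; [lia|exact H2]].
Qed.

(** * Ordinals in Cantor normal form *)

Lemma olt_irrefl (a : ordinal) x : ~ olt a x x.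
Proof.
  induction (olt_wf a x) as [x _ IH]; intro H; exact (IH x H H).
Qed.

Lemma ordinal_upper_bound (a : ordinal) (z : ocar a) (F : list (ocar a)) :
  exists m, forall y, In y F -> olt a y m \/ y = m.
Proof.
  induction F as [|y F [m Hm]]; [exists z; intros y []|].
  destruct (olt_total a y m) as [H|[<-|H]].
  - exists m; intros y' [<-|Hy]; auto.
  - exists y; intros y' [<-|Hy]; auto.
  - exists y; intros y' [<-|Hy]; auto. left.
    destruct (Hm y' Hy) as [H'| ->]; [eapply olt_trans|]; eauto.
Qed.

Lemma le_st_segment_of_strict_mono (A : qo) (a : ordinal) (t : ocar a) (f : car A -> ocar a) :
  (forall x, le A x x) -> (forall x y, le A x y \/ le A y x) ->
  (forall x y, le A x y -> x <> y -> olt a (f x) (f y)) ->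
  (forall x, olt a (f x) t) -> le_st A (segment a t).
Proof.
  intros Hrefl Htot Hmono Ht. exists (fun x => exist _ (f x) (Ht x)).
  assert (Hinj : forall x y, f x = f y -> x = y).
  { intros x y E; apply NNPP; intro Hne.
    destruct (Htot x y) as [H|H]; [apply (olt_irrefl a (f y))|apply (olt_irrefl a (f x))].
    - rewrite <- E at 1; apply Hmono; auto.
    - rewrite E at 1; apply Hmono; auto. }
  split; [intros x y E; apply Hinj; exact (f_equal (@proj1_sig _ _) E)|simpl].
  intros x y; split.
  - intro H; destruct (classic (x = y)) as [<-|Hne]; [right; reflexivity|left; apply Hmono; auto].
  - intros [H|E]; [|rewrite (Hinj x y E); apply Hrefl].
    destruct (Htot x y) as [Hxy|Hyx]; auto.
    destruct (classic (y = x)) as [<-|Hne]; [apply Hrefl|].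
    exfalso; apply (olt_irrefl a (f x)); eapply olt_trans; [exact H|apply Hmono; auto].
Qed.

Lemma cnf_le_cons_inv {A} (R : A -> A -> Prop) d n r l :
  cnf_lt R ((d, n) :: r) l \/ (d, n) :: r = l ->
  exists d' n' r', l = (d', n') :: r' /\ (R d d' \/ d = d').
Proof. intros [H|<-]; [inversion H; subst|]; do 3 eexists; eauto. Qed.

(* If the leading term of [d] is [omega^c * n], then [omega^c * (n+1)] bounds every [d' <= d]. *)
Definition next_lead {A} (z : A) (d : list (A * nat)) : list (A * nat) :=
  match d with (c, n) :: _ => [(c, S n)] | [] => [(z, 1)] end.

Lemma cnf_lt_next_lead {A} (R : A -> A -> Prop) z d d' :
  cnf_lt R d' d \/ d' = d -> cnf_lt R d' (next_lead z d).
Proof.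
  intros [H|<-]; [|destruct d' as [|[c n] r]; constructor; lia].
  destruct d' as [|[c' n'] r']; [destruct d as [|[c n] r]; constructor|].
  inversion H; subst; simpl; [apply cnf_lt_exp|apply cnf_lt_coef|apply cnf_lt_coef]; auto; lia.
Qed.

(* [(e, 1) :: l'] is the ordinal [omega^e + l']. *)
Lemma ww_headroom (g : ordinal) (z : ocar g) (l : list (list (ocar g * nat) * nat)) :
  exists e, cnf_valid (olt g) e /\ cnf_lt (olt g) [] e /\
    forall l', ww_lt g l' l \/ l' = l -> ww_valid g l' -> ww_valid g ((e, 1) :: l').
Proof.
  set (e := next_lead z (match l with (d, _) :: _ => d | [] => [] end)).
  assert (He : cnf_valid (olt g) e /\ cnf_lt (olt g) [] e).
  { unfold e; destruct l as [|[[|[c n] d] m] l]; simpl; split; constructor; lia. }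
  exists e; split; [apply He|split; [apply He|]].
  intros l' Hl' [V1 V2]; split; [|constructor; [apply He|auto]].
  destruct l' as [|[d' n'] r]; [constructor; lia|constructor; auto].
  destruct (cnf_le_cons_inv _ _ _ _ _ Hl') as [d [n [r' [-> Hd]]]].
  apply cnf_lt_next_lead; auto.
Qed.

Definition ww_nat {A} (n : nat) : list (list A * nat) :=
  match n with 0 => [] | S n' => [([], S n')] end.

Lemma ww_nat_valid g n : ww_valid g (ww_nat n).
Proof. destruct n; split; simpl; repeat first [apply cnf_v_nil|apply cnf_v_one; lia|constructor]. Qed.

Lemma ww_nat_lt g i j : i < j -> ww_lt g (ww_nat i) (ww_nat j).
Proof. intro H; destruct i, j; simpl; try lia; constructor; lia. Qed.

Lemma ww_nat_lt_lead g i e n l : cnf_lt (olt g) [] e -> ww_lt g (ww_nat i) ((e, n) :: l).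
Proof. intro He; destruct i; constructor; exact He. Qed.

(** * Approximations of downsets *)

Lemma wpo_iso_refl E : (forall x, le E x x) -> wpo_iso E E.
Proof. intro H; exists (fun x => x); split; [tauto|intro b; exists b; auto]. Qed.

Definition approx_bound (e : expr) (X : qo) : Prop :=
  exists E', approx e E' /\ (forall x, le E' x x) /\ le_cond_st X E'.

Lemma approx_bound_ord (a : ordinal) k (F : list (ocar a)) :
  mult_indec_big a -> approx_bound (EOrd a) (chain_below k (downset (ord_qo a) F)).
Proof.
  intros [g [h [[z] [h_valid [h_onto h_lt]]]]].
  destruct (h_onto [] (conj (cnf_v_nil _) (Forall_nil _))) as [z0 _].
  destruct (ordinal_upper_bound a z0 F) as [m Hm].
  destruct (ww_headroom g z (h m)) as [e [e_valid [e_pos He]]].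
  set (A := chain_below k (downset (ord_qo a) F)).
  set (phi := fun u : car A => match u with
              | inl i => ww_nat (proj1_sig i)
              | inr x => (e, 1) :: h (proj1_sig x) end).
  assert (phi_valid : forall u, ww_valid g (phi u)).
  { intros [[i Hi]|[x [y [Hy Hxy]]]]; [apply ww_nat_valid|apply He; [|apply h_valid]].
    rewrite <- !h_lt. destruct (Hm y Hy) as [H| <-], Hxy as [H'| <-]; eauto using olt_trans. }
  assert (phi_mono : forall u v, le A u v -> u <> v -> ww_lt g (phi u) (phi v)).
  { intros [[i Hi]|[x px]] [[j Hj]|[y py]] H Hne; simpl in *; try contradiction.
    - apply ww_nat_lt. destruct (Nat.eq_dec i j) as [<-|]; [|lia].
      exfalso; apply Hne; f_equal; apply sig_ext; reflexivity.
    - apply ww_nat_lt_lead, e_pos.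
    - apply cnf_lt_tail, h_lt. destruct H as [H| <-]; auto.
      exfalso; apply Hne; f_equal; apply sig_ext; reflexivity. }
  destruct (h_onto [(e, 2)]) as [t Ht]; [repeat constructor; auto|].
  set (f := fun u => proj1_sig (constructive_indefinite_description _ (h_onto (phi u) (phi_valid u)))).
  assert (Hf : forall u, h (f u) = phi u)
    by (intro u; unfold f; destruct (constructive_indefinite_description _ _); auto).
  exists (segment a t); split; [|split; [intro x; right; reflexivity|]].
  - exists t; apply wpo_iso_refl; intro x; right; reflexivity.
  - apply le_cond_st_of_st, (le_st_segment_of_strict_mono A a t f).
    + apply chain_below_refl; intro x; right; reflexivity.
    + apply chain_below_total; intros [x px] [y py]; simpl.
      destruct (olt_total a x y) as [H|[<-|H]]; auto.
    + intros u v H Hne; apply h_lt; rewrite !Hf; auto.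
    + intro u; apply h_lt; rewrite Hf, Ht.
      destruct u as [[[|i] Hi]|x]; simpl;
        [apply cnf_lt_nil|apply cnf_lt_exp, e_pos|apply cnf_lt_coef; lia].
Qed.

Lemma approx_bound_sum e1 e2 k (F : list (car (sem (ESum e1 e2)))) :
  approx_bound e1 (chain_below k (downset (sem e1) (lefts F))) ->
  approx_bound e2 (chain_below k (downset (sem e2) (rights F))) ->
  approx_bound (ESum e1 e2) (chain_below k (downset (sem (ESum e1 e2)) F)).
Proof.
  intros [E1 [A1 [R1 C1]]] [E2 [A2 [R2 C2]]].
  assert (R : forall x : car (qsum E1 E2), le _ x x) by (intros [x|x]; simpl; auto).
  exists (qsum E1 E2); split; [exists E1, E2; auto using wpo_iso_refl|split; [exact R|]].
  eapply le_cond_st_trans; [apply le_cond_st_of_cond, le_cond_chain_below_downset_sum|].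
  apply le_cond_st_sum; auto.
Qed.

Lemma approx_bound_prod e1 e2 k (F : list (car (sem (EProd e1 e2)))) :
  approx_bound e1 (chain_below k (downset (sem e1) (map fst F))) ->
  approx_bound e2 (chain_below k (downset (sem e2) (map snd F))) ->
  approx_bound (EProd e1 e2) (chain_below k (downset (sem (EProd e1 e2)) F)).
Proof.
  intros [E1 [A1 [R1 C1]]] [E2 [A2 [R2 C2]]].
  assert (R : forall x : car (qprod E1 E2), le _ x x) by (intros [x y]; simpl; auto).
  exists (qprod E1 E2); split; [exists E1, E2; auto using wpo_iso_refl|split; [exact R|]].
  eapply le_cond_st_trans; [apply le_cond_st_of_st, le_st_chain_below, le_st_downset_prod|].
  eapply le_cond_st_trans; [apply le_cond_st_of_cond, le_cond_chain_below_prod|].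
  apply le_cond_st_prod; auto.
Qed.

Lemma approx_bound_words e1 k (F : list (car (sem (EWords e1)))) :
  approx_bound e1 (chain_below (S k) (downset (sem e1) (concat F))) ->
  approx_bound (EWords e1) (chain_below k (downset (sem (EWords e1)) F)).
Proof.
  intros [E1 [A1 [R1 C1]]]. set (N := S (list_max (map (@length _) F))).
  assert (R : forall x : car (qpow E1 N), le _ x x) by (intros [x Hx]; apply Forall2_refl, R1).
  exists (qpow E1 N); split; [exists E1, N; auto using wpo_iso_refl|split; [exact R|]].
  eapply le_cond_st_trans; [apply le_cond_st_of_st, le_st_chain_below, le_st_downset_words|].
  eapply le_cond_st_trans; [apply le_cond_st_of_cond, le_cond_collapse_words; unfold N; lia|].
  apply le_cond_st_pow, C1.
Qed.

Lemma approx_bound_msets e1 k (F : list (car (sem (EMset e1)))) :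
  approx_bound e1 (chain_below (S k) (downset (sem e1) (concat F))) ->
  approx_bound (EMset e1) (chain_below k (downset (sem (EMset e1)) F)).
Proof.
  intros [E1 [A1 [R1 C1]]]. set (N := S (list_max (map (@length _) F))).
  assert (R : forall x : car (qmsetn E1 N), le _ x x) by (intros [x Hx]; apply msemb_refl, R1).
  exists (qmsetn E1 N); split; [exists E1, N; auto using wpo_iso_refl|split; [exact R|]].
  eapply le_cond_st_trans; [apply le_cond_st_of_st, le_st_chain_below, le_st_downset_msets|].
  eapply le_cond_st_trans; [apply le_cond_st_of_cond, le_cond_collapse_msets; unfold N; lia|].
  apply le_cond_st_msetn, C1.
Qed.

Lemma approx_bound_pf e1 k (F : list (car (sem (EPf e1)))) :
  approx_bound e1 (chain_below (S k) (downset (sem e1) (concat F))) ->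
  approx_bound (EPf e1) (chain_below k (downset (sem (EPf e1)) F)).
Proof.
  intros [E1 [A1 [R1 C1]]].
  assert (R : forall x : car (qpf E1), le _ x x) by (intros x b Hb; exists b; auto).
  exists (qpf E1); split; [exists E1; auto using wpo_iso_refl|split; [exact R|]].
  eapply le_cond_st_trans; [apply le_cond_st_of_st, le_st_chain_below, le_st_downset_pf|].
  eapply le_cond_st_trans; [apply le_cond_st_of_cond, le_cond_collapse_pf|].
  apply le_cond_st_pf, C1.
Qed.

Lemma approx_bound_elementary e : elementary e ->
  forall k F, approx_bound e (chain_below k (downset (sem e) F)).
Proof.
  induction e as [a|e1 IH1 e2 IH2|e1 IH1 e2 IH2|e1 IH|e1 IH|e1 IH]; simpl; intros He k F.
  - apply approx_bound_ord, He.
  - apply approx_bound_sum; [apply IH1|apply IH2]; apply He.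
  - apply approx_bound_prod; [apply IH1|apply IH2]; apply He.
  - apply approx_bound_words, IH, He.
  - apply approx_bound_msets, IH, He.
  - apply approx_bound_pf, IH, He.
Qed.

Theorem mainTheorem19 (e : expr) :
  elementary e -> normal_form e ->
  forall S : list (car (sem e)),
    exists E' : qo, approx e E' /\ le_cond_st (downset (sem e) S) E'.
Proof.
  intros He _ S. destruct (approx_bound_elementary e He 0 S) as [E' [HA [_ HC]]].
  exists E'; split; [exact HA|].
  eapply le_cond_st_trans; [apply le_cond_st_of_st, le_st_chain_below_top|exact HC].
Qed.
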